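(* Let $1\le k\le n$ and $1\le m<n$ be integers. Let $\mathcal{C}=\{d_1,\dots,d_n\}$ be a corpus of $n$ items of which exactly $m$ are useful (set $\mathcal{C}^+$) and $n-m$ non-useful (set $\mathcal{C}^-$). Define $\mathrm{MU}(i)=\mathbb{1}[i\le k]$. Let $\pi$ be any probability distribution over the set $S_n$ of rankings (permutations) of $\mathcal{C}$, with expected exposure vector $\epsilon_d=\sum_{\sigma\in S_n}\pi(\sigma)\,\mathrm{MU}(\bar\sigma_d)$, where $\bar\sigma_d$ is the rank of $d$ in $\sigma$. Define the target exposure vector $\epsilon^*$ by: for $d\in\mathcal{C}^+$, $\epsilon^*_d=1$ if $m\le k$ and $k/m$ if $m>k$; for $d\in\mathcal{C}^-$, $\epsilon^*_d=\frac{k-m}{n-m}$ if $m\le k$ and $0$ if $m>k$. Then: if $m\le k$, $\langle\epsilon,\epsilon^*\rangle\in\big[0,\ m+\frac{(k-m)^2}{n-m}\big]$; if $m>k$, $\langle\epsilon,\epsilon^*\rangle\in\big[0,\ \frac{k^2}{m}\big]$.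
   Context: $\langle\epsilon,\epsilon^*\rangle$ is the expected exposure relevance (EE-R) of the stochastic ranking policy $\pi$ under a top-$k$ truncation machine-user browsing model; $\epsilon^*$ is the exposure of an oracle retriever ranking all useful items above all non-useful ones uniformly at random within each group. *)

From mathcomp Require Import all_boot all_order all_algebra.
From mathcomp Require Import perm.
Set Implicit Arguments. Unset Strict Implicit. Unset Printing Implicit Defensive.
Import Order.TTheory GRing.Theory Num.Theory.
Local Open Scope ring_scope.

(* Corpus items are 'I_n; a ranking is a permutation sigma : {perm 'I_n},
   where sigma d is the (0-based) rank of item d, i.e. bar-sigma_d = sigma d + 1. *)

Definition MU (R : numDomainType) (k i : nat) : R := (i <= k)%N%:R.

Definition rank_of n (sigma : {perm 'I_n}) (d : 'I_n) : nat := (sigma d).+1.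

Definition is_distr (R : numDomainType) n (pi : {ffun {perm 'I_n} -> R}) : Prop :=
  (forall s, 0 <= pi s) /\ \sum_s pi s = 1.

Definition exposure (R : numDomainType) n k (pi : {ffun {perm 'I_n} -> R}) (d : 'I_n) : R :=
  \sum_(s : {perm 'I_n}) pi s * MU R k (rank_of s d).

Definition target_exposure (R : numFieldType) (n k : nat) (U : {set 'I_n}) (d : 'I_n) : R :=
  let m := #|U| in
  if d \in U then (if (m <= k)%N then 1 else k%:R / m%:R)
  else (if (m <= k)%N then (k%:R - m%:R) / (n%:R - m%:R) else 0).

Definition EER (R : numFieldType) n k (pi : {ffun {perm 'I_n} -> R}) (U : {set 'I_n}) : R :=
  \sum_(d : 'I_n) exposure k pi d * target_exposure R k U d.

(* Averaged over pi, the exposure relevance is the pi-expectation of the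
   relevance of a single ranking, so it suffices to bound the latter.  A
   ranking exposes exactly k items; if S of them are useful and T = k - S are
   not, its relevance is S e+ + T e-, where e+ and e- are the two values the
   target exposure takes on useful and non-useful items.  For m <= k, S <= m
   and e- <= 1 give S + T e- <= m + (k - m) e-; for k < m, e- = 0 and S <= k
   give S e+ <= k e+. *)

From mathcomp Require Import all_boot all_order all_algebra.
From mathcomp Require Import perm.
From mathcomp Require Import lra.

Set Implicit Arguments.
Unset Strict Implicit.
Unset Printing Implicit Defensive.
Import Order.TTheory GRing.Theory Num.Theory.
Local Open Scope ring_scope.

Lemma sum_mul_if (R : pzSemiRingType) (I : finType) (A : {pred I})
    (x : I -> R) (a b : R) :
  \sum_i x i * (if i \in A then a else b) =
  (\sum_(i in A) x i) * a + (\sum_(i | i \notin A) x i) * b.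
Proof.
rewrite (bigID (mem A)) /= !mulr_suml.
by congr (_ + _); apply: eq_bigr => i /= iA; rewrite ?iA ?(negbTE iA).
Qed.

Lemma convex_comb_bounds (R : realDomainType) (I : finType) (p F : I -> R)
    (B : R) :
  (forall i, 0 <= p i) -> \sum_i p i = 1 -> (forall i, 0 <= F i <= B) ->
  0 <= \sum_i p i * F i <= B.
Proof.
move=> p_ge0 p_sum1 F_range; apply/andP; split.
  by apply: sumr_ge0 => i _; case/andP: (F_range i) => F_ge0 _; rewrite mulr_ge0.
rewrite -[leRHS]mul1r -p_sum1 mulr_suml; apply: ler_sum => i _.
by case/andP: (F_range i) => _ F_leB; rewrite ler_wpM2l.
Qed.

Lemma MU_ge0 (R : numDomainType) k i : 0 <= MU R k i.
Proof. by rewrite /MU ler0n. Qed.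

Lemma MU_le1 (R : numDomainType) k i : MU R k i <= 1.
Proof. by rewrite /MU lern1 leq_b1. Qed.

Section SingleRanking.

Variables (R : realFieldType) (n k : nat) (U : {set 'I_n}).
Implicit Types (s : {perm 'I_n}) (d : 'I_n).

Lemma sum_MU_rank s : (k <= n)%N -> \sum_d MU R k (rank_of s d) = k%:R.
Proof.
move=> le_kn; rewrite (reindex_inj (@perm_inj _ s^-1)) /=.
have -> : k%:R = \sum_(i < k) 1 :> R by rewrite sumr_const card_ord.
rewrite (big_ord_widen n (fun=> 1) le_kn) [RHS]big_mkcond.
by apply: eq_bigr => i _; rewrite /MU /rank_of permKV; case: (i < k)%N.
Qed.

Definition useful_exposure s : R := \sum_(d in U) MU R k (rank_of s d).
Definition nonuseful_exposure s : R := \sum_(d | d \notin U) MU R k (rank_of s d).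

Definition ranking_relevance s : R :=
  \sum_d MU R k (rank_of s d) * target_exposure R k U d.

Lemma useful_exposure_ge0 s : 0 <= useful_exposure s.
Proof. by apply: sumr_ge0 => d _; exact: MU_ge0. Qed.

Lemma nonuseful_exposure_ge0 s : 0 <= nonuseful_exposure s.
Proof. by apply: sumr_ge0 => d _; exact: MU_ge0. Qed.

Lemma useful_exposure_le_card s : useful_exposure s <= #|U|%:R.
Proof.
rewrite -sum1_card natr_sum; apply: ler_sum => d _; exact: MU_le1.
Qed.

Lemma useful_add_nonuseful_exposure s :
  (k <= n)%N -> useful_exposure s + nonuseful_exposure s = k%:R.
Proof. by move=> le_kn; rewrite -(sum_MU_rank s le_kn) [RHS](bigID (mem U)). Qed.

Lemma ranking_relevanceE s :
  ranking_relevance s =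
  useful_exposure s * (if (#|U| <= k)%N then 1 else k%:R / #|U|%:R) +
  nonuseful_exposure s *
    (if (#|U| <= k)%N then (k%:R - #|U|%:R) / (n%:R - #|U|%:R) else 0).
Proof. exact: sum_mul_if. Qed.

End SingleRanking.

Lemma EER_expectation (R : realFieldType) n k (pi : {ffun {perm 'I_n} -> R})
    (U : {set 'I_n}) :
  EER k pi U = \sum_s pi s * ranking_relevance R k U s.
Proof.
rewrite /EER /exposure; under eq_bigr do rewrite mulr_suml.
rewrite exchange_big /=; apply: eq_bigr => s _; rewrite mulr_sumr.
by apply: eq_bigr => d _; rewrite mulrA.
Qed.

Lemma relevance_bounds_small_useful (R : realDomainType) (S T m k c : R) :
  0 <= S -> S <= m -> 0 <= T -> S + T = k -> 0 <= c -> c <= 1 ->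
  0 <= S + T * c <= m + (k - m) * c.
Proof. by move=> ? ? ? <- ? ?; apply/andP; split; nra. Qed.

Theorem corollary2 (R : realFieldType) (n k m : nat) (U : {set 'I_n})
    (pi : {ffun {perm 'I_n} -> R}) :
  (1 <= k)%N -> (k <= n)%N -> (1 <= m)%N -> (m < n)%N -> #|U| = m ->
  is_distr pi ->
  ((m <= k)%N ->
     0 <= EER k pi U /\ EER k pi U <= m%:R + (k%:R - m%:R) ^+ 2 / (n%:R - m%:R)) /\
  ((k < m)%N ->
     0 <= EER k pi U /\ EER k pi U <= k%:R ^+ 2 / m%:R).
Proof.
move=> _ le_kn _ lt_mn cardU [pi_ge0 pi_sum1]; rewrite EER_expectation.
have expectation_range B : (forall s, 0 <= ranking_relevance R k U s <= B) ->
    0 <= \sum_s pi s * ranking_relevance R k U s /\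
    \sum_s pi s * ranking_relevance R k U s <= B.
  by move=> range; apply/andP; exact: convex_comb_bounds.
have ST s := useful_add_nonuseful_exposure R U s le_kn.
split=> [le_mk | lt_km]; apply: expectation_range => s;
  rewrite ranking_relevanceE cardU.
- have nm_gt0 : 0 < n%:R - m%:R :> R by rewrite subr_gt0 ltr_nat.
  have c_ge0 : 0 <= (k%:R - m%:R) / (n%:R - m%:R) :> R.
    by apply: divr_ge0; [rewrite subr_ge0 ler_nat | exact: ltW].
  have c_le1 : (k%:R - m%:R) / (n%:R - m%:R) <= 1 :> R.
    by rewrite ler_pdivrMr // mul1r lerD2r ler_nat.
  rewrite le_mk mulr1 expr2 -mulrA.
  apply: relevance_bounds_small_useful (ST s) c_ge0 c_le1.
  - exact: useful_exposure_ge0.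
  - by rewrite -cardU useful_exposure_le_card.
  - exact: nonuseful_exposure_ge0.
- have S_le_k : useful_exposure R k U s <= k%:R.
    by rewrite -(ST s) lerDl nonuseful_exposure_ge0.
  have ratio_ge0 : 0 <= k%:R / m%:R :> R by rewrite divr_ge0.
  rewrite leqNgt lt_km /= mulr0 addr0 expr2 -mulrA.
  by rewrite mulr_ge0 ?useful_exposure_ge0 ?ler_wpM2r.
Qed.
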